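(* Let $\Gamma$ be an Arf numerical semigroup with multiplicity $e>1$ and conductor $c$, let $e'\in\Gamma\setminus\{0\}$, $\Gamma_{e'}=\{0\}\cup(e'+\Gamma)$, and $c'=c+e'$ (the conductor of $\Gamma_{e'}$). Then \[ \delta^2_{\Gamma_{e'}}(c'+e'-1)=\begin{cases}4 & \text{if } e'=e,\\ 5 & \text{otherwise.}\end{cases} \]
   Context: A numerical semigroup is a subset $\Gamma\subseteq\mathbb N$ containing $0$, closed under addition, with finite complement; write $\Gamma=\{0=\rho_1<\rho_2<\cdots\}$; multiplicity $e=\rho_2$; conductor = least $c$ with $c+\mathbb N\subseteq\Gamma$. $\Gamma$ is Arf if $\rho_i+\rho_j-\rho_k\in\Gamma$ for all $i\ge j\ge k$. For a numerical semigroup $S$: $D_S(x)=\{s\in S:x-s\in S\}$ and $\delta^2_S(m)=\min\{|D_S(m_1)\cup D_S(m_2)|: m\le m_1<m_2,\ m_i\in S\}$. *)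

From mathcomp Require Import all_boot.
Set Implicit Arguments.
Unset Strict Implicit.
Unset Printing Implicit Defensive.

Definition numerical_semigroup (S : pred nat) : Prop :=
  [/\ S 0, (forall a b, S a -> S b -> S (a + b)) &
      exists N, forall n, N <= n -> S n].

Definition arf (S : pred nat) : Prop :=
  forall x y z, S x -> S y -> S z -> y <= x -> z <= y -> S (x + y - z).

Definition is_multiplicity (S : pred nat) (e : nat) : Prop :=
  [/\ 0 < e, S e & forall s, 0 < s -> S s -> e <= s].

Definition is_conductor (S : pred nat) (c : nat) : Prop :=
  (forall n, c <= n -> S n) /\
  (forall c', (forall n, c' <= n -> S n) -> c <= c').

Definition shift_sg (S : pred nat) (e' : nat) : pred nat :=
  fun n => (n == 0) || ((e' <= n) && S (n - e')).

(* D_S(x) = { s in S : x - s in S } (as a duplicate-free list; every such s is <= x). *)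
Definition Dset (S : pred nat) (x : nat) : seq nat :=
  [seq s <- iota 0 x.+1 | S s && S (x - s)].

Definition Dunion_card (S : pred nat) (m1 m2 : nat) : nat :=
  size (undup (Dset S m1 ++ Dset S m2)).

Definition delta2_is (S : pred nat) (m k : nat) : Prop :=
  (exists m1 m2, [/\ m <= m1, m1 < m2, S m1, S m2 & Dunion_card S m1 m2 = k]) /\
  (forall m1 m2, m <= m1 -> m1 < m2 -> S m1 -> S m2 -> k <= Dunion_card S m1 m2).

(** Write S = {0} ∪ (e' + G).  Besides 0 + x and x + 0, the decompositions of
    x = e' + e' + n into two elements of S are exactly (e' + a) + (e' + b) with
    a + b = n in G.  The Frobenius number c - 1 has no such decomposition, and by
    the Arf property c - 1 + e has only those with a = 0 or b = 0 (otherwise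
    a + b - e = c - 1 would lie in G).  So for m1 = c - 1 + 2e' and m2 = m1 + e
    the union D(m1) ∪ D(m2) is {0, e', m1, m2, e' + c - 1 + e}, whose last element
    equals m1 exactly when e' = e.  Conversely, for any admissible m1 < m2 the
    union contains 0, e', m1, m2, and when e < e' also m2 - e' if m2 <> m1 + e',
    and e + e' otherwise. *)
From mathcomp Require Import all_boot zify.

Set Implicit Arguments.
Unset Strict Implicit.
Unset Printing Implicit Defensive.

Lemma mem_Dset (S : pred nat) x s : (s \in Dset S x) = [&& s <= x, S s & S (x - s)].
Proof. by rewrite mem_filter mem_iota add0n ltnS /= andbC. Qed.

Lemma mem_Dset0 (S : pred nat) x : S 0 -> S x -> 0 \in Dset S x.
Proof. by move=> S0 Sx; rewrite mem_Dset S0 subn0 Sx. Qed.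

Lemma mem_Dset_self (S : pred nat) x : S 0 -> S x -> x \in Dset S x.
Proof. by move=> S0 Sx; rewrite mem_Dset leqnn subnn Sx S0. Qed.

Lemma Dunion_card_eq (S : pred nat) m1 m2 (W : seq nat) :
  uniq W -> Dset S m1 ++ Dset S m2 =i W -> Dunion_card S m1 m2 = size W.
Proof.
move=> uW DW; apply/perm_size/uniq_perm => //; first exact: undup_uniq.
by move=> s; rewrite mem_undup DW.
Qed.

Lemma Dunion_card_ge (S : pred nat) m1 m2 (W : seq nat) :
  uniq W -> {subset W <= Dset S m1 ++ Dset S m2} -> size W <= Dunion_card S m1 m2.
Proof. by move=> uW WD; apply: uniq_leq_size => // s /WD; rewrite mem_undup. Qed.

Lemma conductor_gap (G : pred nat) c : is_conductor G c -> 0 < c -> ~~ G c.-1.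
Proof.
move=> [Gc cmin] c_gt0; apply/negP => Gc1.
suff /cmin : forall n, c.-1 <= n -> G n by lia.
by move=> n; rewrite leq_eqVlt prednK // => /predU1P [<- //|/Gc].
Qed.

Lemma conductor_gt1 (G : pred nat) e c :
  G 0 -> is_multiplicity G e -> 1 < e -> is_conductor G c -> 1 < c.
Proof.
move=> G0 [_ _ emin] e_gt1 Gcond.
have c_gt0 : 0 < c.
  rewrite lt0n; apply: contraTneq e_gt1 => c0.
  by rewrite -leqNgt emin // (proj1 Gcond) // c0.
case: c c_gt0 Gcond => [|[|c]] // _ Gcond.
by have := conductor_gap Gcond isT; rewrite G0.
Qed.

Lemma arf_sub_mult (G : pred nat) e a b : arf G -> is_multiplicity G e ->
  0 < a -> 0 < b -> G a -> G b -> G (a + b - e).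
Proof.
move=> Garf [_ Ge emin] a_gt0 b_gt0 Ga Gb.
case: (leqP b a) => [ba|/ltnW ab]; first exact: Garf (emin _ b_gt0 Gb).
by rewrite addnC; apply: Garf (emin _ a_gt0 Ga).
Qed.

Section ShiftedSemigroup.

Variables (G : pred nat) (e' : nat).
Hypotheses (G0 : G 0) (Gadd : forall a b, G a -> G b -> G (a + b)).

Local Notation S := (shift_sg G e').

Lemma shift_sg_addl a : G a -> S (e' + a).
Proof. by move=> Ga; rewrite /shift_sg leq_addr addKn Ga orbT. Qed.

Lemma mem_Dset_shift x s a b :
  G a -> G b -> s = e' + a -> x = s + (e' + b) -> s \in Dset S x.
Proof.
by move=> Ga Gb -> ->; rewrite mem_Dset leq_addr addKn !shift_sg_addl.
Qed.

Lemma Dset_shiftP x s : s \in Dset S x ->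
  [\/ s = 0, s = x | exists a b, [/\ G a, G b, s = e' + a & x = s + (e' + b)]].
Proof.
rewrite mem_Dset /shift_sg => /and3P [sx /orP [/eqP s0 _|/andP [es Gs]]].
  exact: Or31.
case/orP => [/eqP xs0|/andP [exs Gxs]]; first by apply: Or32; lia.
by apply: Or33; exists (s - e'), (x - s - e'); split => //; lia.
Qed.

Lemma Dset_shift_gap n : G (e' + n) -> ~~ G n ->
  Dset S (e' + (e' + n)) =i [:: 0; e' + (e' + n)].
Proof.
move=> Gn' nGn s; rewrite !inE; apply/idP/idP.
- case/Dset_shiftP => [->|->|[a [b [Ga Gb -> ab]]]]; rewrite ?eqxx ?orbT //.
  have abn : a + b = n by lia.
  by rewrite -abn Gadd in nGn.
- by case/orP => /eqP ->; [apply: mem_Dset0 | apply: mem_Dset_self];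
    rewrite ?shift_sg_addl.
Qed.

Lemma Dset_shift_trivial_split n : G (e' + n) -> G n ->
  (forall a b, 0 < a -> 0 < b -> G a -> G b -> a + b != n) ->
  Dset S (e' + (e' + n)) =i [:: 0; e'; e' + n; e' + (e' + n)].
Proof.
move=> Gn' Gn nsplit s; rewrite !inE; apply/idP/idP.
- case/Dset_shiftP => [->|->|[a [b [Ga Gb -> ab]]]]; rewrite ?eqxx ?orbT //.
  have [a0|a_gt0] := posnP a; first lia.
  have [b0|b_gt0] := posnP b; first lia.
  by have := nsplit a b a_gt0 b_gt0 Ga Gb; lia.
- case/or4P => /eqP ->.
  + by apply: mem_Dset0; rewrite ?shift_sg_addl.
  + by apply: (mem_Dset_shift G0 Gn); lia.
  + by apply: (mem_Dset_shift Gn G0); lia.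
  + by apply: mem_Dset_self; rewrite ?shift_sg_addl.
Qed.

End ShiftedSemigroup.

Section ArfShift.

Variables (G : pred nat) (e c e' : nat).
Hypotheses (G0 : G 0) (Gadd : forall a b, G a -> G b -> G (a + b)) (Garf : arf G).
Hypotheses (Gmult : is_multiplicity G e) (e_gt1 : 1 < e) (Gcond : is_conductor G c).
Hypotheses (Ge' : G e') (e'_gt0 : 0 < e').

Local Notation S := (shift_sg G e').

Let c_gt1 : 1 < c. Proof. exact: conductor_gt1 G0 Gmult e_gt1 Gcond. Qed.
Let Gc : forall n, c <= n -> G n. Proof. by case: Gcond. Qed.
Let Ge : G e. Proof. by case: Gmult. Qed.
Let e_le_e' : e <= e'. Proof. by case: Gmult => _ _; apply. Qed.

Lemma Dset_shift_conductor :
  Dset S (e' + (e' + c.-1)) =i [:: 0; e' + (e' + c.-1)].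
Proof.
by apply: Dset_shift_gap => //; [apply: Gc | apply: conductor_gap Gcond _]; lia.
Qed.

Lemma Dset_shift_conductor_mult :
  Dset S (e' + (e' + (c.-1 + e))) =i
    [:: 0; e'; e' + (c.-1 + e); e' + (e' + (c.-1 + e))].
Proof.
apply: Dset_shift_trivial_split => //; try by apply: Gc; lia.
move=> a b a_gt0 b_gt0 Ga Gb; apply/eqP => ab.
have := arf_sub_mult Garf Gmult a_gt0 b_gt0 Ga Gb.
by rewrite ab addnK; apply/negP/(conductor_gap Gcond); lia.
Qed.

Lemma Dunion_card_conductor :
  Dunion_card S (e' + (e' + c.-1)) (e' + (e' + (c.-1 + e))) =
    if e' == e then 4 else 5.
Proof.
case: eqP => [ee'|ne'].
- apply: (Dunion_card_eq (W := [:: 0; e'; e' + (e' + c.-1); e' + (e' + (c.-1 + e))])).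
    by rewrite /= !inE; lia.
  by move=> s; rewrite mem_cat Dset_shift_conductor Dset_shift_conductor_mult !inE; lia.
- apply: (Dunion_card_eq
    (W := [:: 0; e'; e' + (e' + c.-1); e' + (c.-1 + e); e' + (e' + (c.-1 + e))])).
    by rewrite /= !inE; lia.
  by move=> s; rewrite mem_cat Dset_shift_conductor Dset_shift_conductor_mult !inE; lia.
Qed.

Lemma Dunion_card_lower m1 m2 : e' + (e' + c.-1) <= m1 -> m1 < m2 ->
  (if e' == e then 4 else 5) <= Dunion_card S m1 m2.
Proof.
move=> m1_ge m12.
have Sn n : e' + (e' + c.-1) <= n -> S n.
  move=> n_ge; rewrite -(subnKC (leq_trans (leq_addr _ _) n_ge)).
  by apply/shift_sg_addl/Gc; lia.
have sub4 : {subset [:: 0; e'; m1; m2] <= Dset S m1 ++ Dset S m2}.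
  move=> s; rewrite mem_cat !inE => /or4P [] /eqP ->; apply/orP.
  - by left; apply: mem_Dset0 => //; apply: Sn.
  - by right; apply: (mem_Dset_shift (a := 0) (b := m2 - e' - e') G0 (Gc _)); lia.
  - by left; apply: mem_Dset_self => //; apply: Sn.
  - by right; apply: mem_Dset_self => //; apply: Sn; lia.
case: eqP => [_|ne']; first by apply: Dunion_card_ge sub4; rewrite /= !inE; lia.
have [s Us s_new] :
    exists2 s, s \in Dset S m1 ++ Dset S m2 & s \notin [:: 0; e'; m1; m2].
  have [m2E|m2N] := eqVneq m2 (m1 + e').
  - exists (e' + e); last by rewrite !inE; lia.
    rewrite mem_cat; apply/orP; right.
    by apply: (mem_Dset_shift (b := m1 - e' - e) Ge (Gc _)); lia.
  - exists (m2 - e'); last by rewrite !inE; lia.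
    rewrite mem_cat; apply/orP; right.
    by apply: (mem_Dset_shift (a := m2 - e' - e') (Gc _) G0); lia.
apply: (Dunion_card_ge (W := s :: [:: 0; e'; m1; m2])).
  by rewrite cons_uniq s_new /= !inE; lia.
by move=> x /predU1P [->|/sub4].
Qed.

End ArfShift.

Theorem lemma4p10 (G : pred nat) (e c e' : nat) :
  numerical_semigroup G -> arf G ->
  is_multiplicity G e -> 1 < e ->
  is_conductor G c ->
  G e' -> 0 < e' ->
  delta2_is (shift_sg G e') ((c + e') + e' - 1) (if e' == e then 4 else 5).
Proof.
move=> [G0 Gadd _] Garf Gmult e_gt1 Gcond Ge' e'_gt0.
have c_gt1 := conductor_gt1 G0 Gmult e_gt1 Gcond.
have [Gc _] := Gcond.
have -> : c + e' + e' - 1 = e' + (e' + c.-1) by lia.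
split.
- exists (e' + (e' + c.-1)), (e' + (e' + (c.-1 + e))).
  split; [lia | lia | apply: shift_sg_addl; apply: Gc; lia
         | apply: shift_sg_addl; apply: Gc; lia | ].
  exact: Dunion_card_conductor.
- move=> m1 m2 m1_ge m12 _ _.
  exact: Dunion_card_lower G0 Gmult e_gt1 Gcond Ge' e'_gt0 _ _ m1_ge m12.
Qed.
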